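(* Let $A=\mathbb C\langle u^{\pm1},v^{\pm1}\rangle$ and $c=uvu^{-1}v^{-1}$. For every $H\in A$, $\{c,H\}_K\equiv0\bmod[A,A]$; that is, $\pi(c)$ lies in the center of the bracket induced by $\{\cdot,\cdot\}_K$ on $A/[A,A]$.
   Context: $A$ is the group algebra over $\mathbb C$ of the free group on $u,v$; $[A,A]$ is the span of all $ab-ba$; $\pi:A\to A/[A,A]$ the projection. $\mu(a\otimes b)=ab$; $A\otimes A$ has componentwise multiplication. The double bracket $\llbracket\cdot\rrbracket_K:A\otimes A\to A\otimes A$ is the linear map with $\llbracket u\otimes v\rrbracket_K=-vu\otimes1$, $\llbracket v\otimes u\rrbracket_K=uv\otimes1$, $\llbracket u\otimes u\rrbracket_K=\llbracket v\otimes v\rrbracket_K=0$, extended (also to inverse letters) by the Leibniz rules $\llbracket a\otimes bc\rrbracket_K=\llbracket a\otimes b\rrbracket_K(1\otimes c)+(b\otimes1)\llbracket a\otimes c\rrbracket_K$ and $\llbracket ab\otimes c\rrbracket_K=\llbracket a\otimes c\rrbracket_K(b\otimes1)+(1\otimes a)\llbracket b\otimes c\rrbracket_K$. The bracket is $\{a,b\}_K=\mu(\llbracket a\otimes b\rrbracket_K)$. *)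

From HB Require Import structures.
From mathcomp Require Import all_boot all_algebra.
From mathcomp Require Import finmap.
From mathcomp Require Import monalg.
From mathcomp Require Import complex.
From mathcomp Require Import Rstruct.

Set Implicit Arguments.
Unset Strict Implicit.
Unset Printing Implicit Defensive.

Import GRing.Theory.
Local Open Scope ring_scope.

Definition Cc : fieldType := (Rdefinitions.R)[i].

(* The free group F(u,v) on two generators, as reduced words.
   A letter is a pair (g, e): g = false means u, g = true means v;
   e = false is the letter itself, e = true its inverse. *)
Definition letter := (bool * bool)%type.
Definition linv (x : letter) : letter := (x.1, ~~ x.2).

Definition lpush (x : letter) (s : seq letter) : seq letter :=
  if s is y :: s' then (if y == linv x then s' else x :: s) else [:: x].

Definition reduce (w : seq letter) : seq letter := foldr lpush [::] w.

Definition reducedw (w : seq letter) : bool :=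
  sorted (fun x y => y != linv x) w.

Lemma reduce_reduced w : reducedw (reduce w).
Proof.
rewrite /reducedw; elim: w => [|x w IH] //=.
rewrite /lpush; case: (reduce w) IH => [|y s] //= Hs.
case: ifP => [_|/negbT Hy]; first exact: path_sorted Hs.
by rewrite /= Hy Hs.
Qed.

Record FG := FGword { fgval : seq letter; _ : reducedw fgval }.
HB.instance Definition _ := [isSub for fgval].
HB.instance Definition _ := [Equality of FG by <:].
HB.instance Definition _ := [Choice of FG by <:].

Definition fgmul (g h : FG) : FG :=
  @FGword (reduce (fgval g ++ fgval h)) (reduce_reduced _).
Definition fg1 : FG := @FGword [::] isT.
Definition fg_letter (x : letter) : FG := @FGword [:: x] isT.
Definition fg_u  : FG := fg_letter (false, false).
Definition fg_v  : FG := fg_letter (true, false).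
Definition fg_ui : FG := fg_letter (false, true).
Definition fg_vi : FG := fg_letter (true, true).

Definition gconv (K : choiceType) (op : K -> K -> K)
    (a b : {malg Cc[K]}) : {malg Cc[K]} :=
  \sum_(g <- msupp a) \sum_(h <- msupp b) << a@_g * b@_h *g op g h >>.

(* A = C<u^{+-1}, v^{+-1}> = C[F(u,v)] *)
Definition A := {malg Cc[FG]}.
Definition Amul (a b : A) : A := gconv fgmul a b.
Definition A1 : A := << fg1 >>.
Definition Au  : A := << fg_u >>.
Definition Av  : A := << fg_v >>.
Definition Aui : A := << fg_ui >>.
Definition Avi : A := << fg_vi >>.

(* A (x) A = C[F(u,v) x F(u,v)], with componentwise multiplication *)
Definition fgmul2 (p q : FG * FG) : FG * FG := (fgmul p.1 q.1, fgmul p.2 q.2).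
Definition AA := {malg Cc[(FG * FG)%type]}.
Definition AAmul (x y : AA) : AA := gconv fgmul2 x y.

Definition tens (a b : A) : AA :=
  \sum_(g <- msupp a) \sum_(h <- msupp b) << a@_g * b@_h *g (g, h) >>.

Definition mu (x : AA) : A :=
  \sum_(p <- msupp x) << x@_p *g fgmul p.1 p.2 >>.

Definition in_commA (x : A) : Prop :=
  exists s : seq (Cc * (A * A)),
    x = \sum_(t <- s) t.1 *: (Amul t.2.1 t.2.2 - Amul t.2.2 t.2.1).

Definition is_double_bracket_K (D : {linear AA -> AA}) : Prop :=
  [/\ D (tens Au Av) = - tens (Amul Av Au) A1,
      D (tens Av Au) = tens (Amul Au Av) A1,
      D (tens Au Au) = 0 /\ D (tens Av Av) = 0,
      (forall a b c : A,
          D (tens a (Amul b c)) =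
          AAmul (D (tens a b)) (tens A1 c) + AAmul (tens b A1) (D (tens a c)))
    & (forall a b c : A,
          D (tens (Amul a b) c) =
          AAmul (D (tens a c)) (tens b A1) + AAmul (tens A1 a) (D (tens b c)))].

Definition bracketK (D : {linear AA -> AA}) (a b : A) : A := mu (D (tens a b)).

Definition cA : A := Amul (Amul (Amul Au Av) Aui) Avi.

(* Write delta H := {c, H}_K - (c H - H c).  The Leibniz rule in the second
   argument makes {c, .}_K a derivation of A, and so is the inner derivation
   H |-> c H - H c; hence delta is a linear derivation.  A derivation vanishing
   on u and v also vanishes on u^-1 and v^-1, hence on every reduced word, hence
   everywhere.  The values delta u = delta v = 0 are a finite computation: the
   Leibniz rule in the first argument expands [[c (x) u]] and [[c (x) v]] letter
   by letter, with [[g^-1 (x) w]] = - (1 (x) g^-1) [[g (x) w]] (g^-1 (x) 1).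
   So {c, H}_K = c H - H c lies in [A, A]. *)

From Pilot Require Import Defs.
From HB Require Import structures.
From mathcomp Require Import all_boot all_algebra sesquilinear.
From mathcomp Require Import finmap monalg complex Rstruct.

Set Implicit Arguments.
Unset Strict Implicit.
Unset Printing Implicit Defensive.
Import GRing.Theory.
Local Open Scope ring_scope.

(* monalg also exports an [fgmul]. *)
Local Notation fgmul := Defs.fgmul.

Lemma linvK : involutive linv.
Proof. by case=> g e; rewrite /linv /= negbK. Qed.

Lemma reduce_id w : reducedw w -> reduce w = w.
Proof.
elim: w => [|x w IH] //= red_xw; rewrite IH; last exact: path_sorted red_xw.
by case: w red_xw {IH} => [|y w] //= /andP[/negbTE ->].
Qed.

Lemma reduce_cat s t : reduce (s ++ t) = foldr lpush (reduce t) s.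
Proof. exact: foldr_cat. Qed.

Lemma reduce_lpush_cat x r t : reduce (lpush x r ++ t) = lpush x (reduce (r ++ t)).
Proof.
case: r => [|y r] //=; case: ifP => [/eqP ->|_] //=.
have : reducedw (reduce (r ++ t)) by exact: reduce_reduced.
case: (reduce (r ++ t)) => [|z w] /=; first by rewrite eqxx.
rewrite linvK; case: eqP => [-> red_w|_ _]; last by rewrite /= eqxx.
by case: w red_w => [|z' w] //= /andP[/negbTE ->].
Qed.

Lemma reduce_catl s t : reduce (reduce s ++ t) = reduce (s ++ t).
Proof. by elim: s => [|x s IH] //=; rewrite reduce_lpush_cat IH. Qed.

Lemma reduce_catr s t : reduce (s ++ reduce t) = reduce (s ++ t).
Proof. by rewrite !reduce_cat reduce_id // reduce_reduced. Qed.

Lemma fgmulA : associative fgmul.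
Proof. by move=> g h k; apply: val_inj; rewrite /= reduce_catl reduce_catr catA. Qed.

Lemma fgmul1g : left_id fg1 fgmul.
Proof. by case=> w red_w; apply: val_inj; rewrite /= reduce_id. Qed.

Lemma fgmulg1 : right_id fg1 fgmul.
Proof. by case=> w red_w; apply: val_inj; rewrite /= cats0 reduce_id. Qed.

Lemma fgword_cons x w (red_xw : reducedw (x :: w)) :
  FGword red_xw = fgmul (fg_letter x) (FGword (path_sorted red_xw)).
Proof.
apply: val_inj; rewrite /= reduce_id; last exact: path_sorted red_xw.
by case: w red_xw => [|y w] //= /andP[/negbTE ->].
Qed.

Lemma scale_monalgU (K : choiceType) (c x : Cc) (k : K) :
  c *: << x *g k >> = << c * x *g k >>.
Proof. by apply/malgP=> k'; rewrite mcoeffZ !mcoeffU mulrnAr. Qed.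

Lemma msuppZD_le (K : choiceType) c (x y : {malg Cc[K]}) :
  (msupp (c *: x + y) `<=` msupp x `|` msupp y)%fset.
Proof. exact: fsubset_trans (msuppD_le _ _) (fsetSU _ (msuppZ_le _ _)). Qed.

(* [basis], [mconv] and [mmap] are locked: a failed unification between
   unfolded monoid-algebra terms over [FG * FG] is extremely slow (it computes
   with pickled keys), so all reasoning happens at the level of these names. *)
Fact basis_key : unit. Proof. by []. Qed.
Definition basis (K : choiceType) : K -> {malg Cc[K]} :=
  locked_with basis_key (fun k => << k >>).

Lemma basisE (K : choiceType) (k : K) : basis k = << k >>.
Proof. by rewrite /basis unlock. Qed.

Fact mconv_key : unit. Proof. by []. Qed.

Section Convolution.
Variables (K1 K2 K3 : choiceType) (op : K1 -> K2 -> K3).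

Definition mconv : {malg Cc[K1]} -> {malg Cc[K2]} -> {malg Cc[K3]} :=
  locked_with mconv_key (fun a b =>
    \sum_(g <- msupp a) \sum_(h <- msupp b) << a@_g * b@_h *g op g h >>).

Lemma mconvEw (d1 : {fset K1}) (d2 : {fset K2}) a b :
  (msupp a `<=` d1)%fset -> (msupp b `<=` d2)%fset ->
  mconv a b = \sum_(g <- d1) \sum_(h <- d2) << a@_g * b@_h *g op g h >>.
Proof.
move=> le_d1 le_d2; rewrite /mconv unlock (big_fset_incl _ le_d1) /=.
  apply/eq_bigr=> g _; apply/big_fset_incl => // h _ /mcoeff_outdom ->.
  by rewrite mulr0 monalgU0.
move=> g _ /mcoeff_outdom ->.
by rewrite big1 => // h _; rewrite mul0r monalgU0.
Qed.

Lemma mconv_is_bilinear : bilinear_for *:%R *:%R mconv.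
Proof.
split=> [b|a] c x y /=.
  rewrite (mconvEw (msuppZD_le c x y) (fsubset_refl (msupp b))).
  rewrite (mconvEw (fsubsetUl _ (msupp y)) (fsubset_refl (msupp b))).
  rewrite (mconvEw (fsubsetUr (msupp x) _) (fsubset_refl (msupp b))).
  rewrite scaler_sumr -big_split; apply: eq_bigr => g _.
  rewrite scaler_sumr -big_split; apply: eq_bigr => h _.
  by rewrite mcoeffD mcoeffZ mulrDl monalgUD scale_monalgU mulrA.
rewrite (mconvEw (fsubset_refl (msupp a)) (msuppZD_le c x y)).
rewrite (mconvEw (fsubset_refl (msupp a)) (fsubsetUl _ (msupp y))).
rewrite (mconvEw (fsubset_refl (msupp a)) (fsubsetUr (msupp x) _)).
rewrite scaler_sumr -big_split; apply: eq_bigr => g _.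
rewrite scaler_sumr -big_split; apply: eq_bigr => h _.
by rewrite mcoeffD mcoeffZ mulrDr monalgUD scale_monalgU mulrCA.
Qed.

Lemma mconv_basis k1 k2 : mconv (basis k1) (basis k2) = basis (op k1 k2).
Proof.
by rewrite !basisE (mconvEw msuppU_le msuppU_le) !big_seq_fset1 !mcoeffUU mulr1.
Qed.

End Convolution.

HB.instance Definition _ (K1 K2 K3 : choiceType) (op : K1 -> K2 -> K3) :=
  bilinear_isBilinear.Build Cc _ _ _ *:%R *:%R (mconv op) (mconv_is_bilinear op).

Section ConvolutionAdditive.
Variables (K1 K2 K3 : choiceType) (op : K1 -> K2 -> K3).

Lemma mconv0l b : mconv op 0 b = 0. Proof. exact: linear0l. Qed.
Lemma mconv0r a : mconv op a 0 = 0. Proof. exact: linear0r. Qed.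
Lemma mconvNl a b : mconv op (- a) b = - mconv op a b. Proof. exact: linearNl. Qed.
Lemma mconvNr a b : mconv op a (- b) = - mconv op a b. Proof. exact: linearNr. Qed.
Lemma mconvDl a a' b : mconv op (a + a') b = mconv op a b + mconv op a' b.
Proof. exact: linearDl. Qed.
Lemma mconvBl a a' b : mconv op (a - a') b = mconv op a b - mconv op a' b.
Proof. exact: linearBl. Qed.
Lemma mconvBr a b b' : mconv op a (b - b') = mconv op a b - mconv op a b'.
Proof. exact: linearBr. Qed.

End ConvolutionAdditive.

Fact mmap_key : unit. Proof. by []. Qed.

Section Pushforward.
Variables (K K' : choiceType) (f : K -> K').

Definition mmap : {malg Cc[K]} -> {malg Cc[K']} :=
  locked_with mmap_key (fun x => \sum_(k <- msupp x) << x@_k *g f k >>).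

Lemma mmapEw (d : {fset K}) x : (msupp x `<=` d)%fset ->
  mmap x = \sum_(k <- d) << x@_k *g f k >>.
Proof.
move=> le_d; rewrite /mmap unlock (big_fset_incl _ le_d) //.
by move=> k _ /mcoeff_outdom ->; rewrite monalgU0.
Qed.

Lemma mmap_is_linear : linear mmap.
Proof.
move=> c x y; rewrite (mmapEw (msuppZD_le c x y)).
rewrite (mmapEw (fsubsetUl _ (msupp y))) (mmapEw (fsubsetUr (msupp x) _)).
rewrite scaler_sumr -big_split; apply: eq_bigr => k _.
by rewrite mcoeffD mcoeffZ monalgUD scale_monalgU.
Qed.

Lemma mmap_basis k : mmap (basis k) = basis (f k).
Proof. by rewrite !basisE (mmapEw msuppU_le) big_seq_fset1 mcoeffUU. Qed.

End Pushforward.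

HB.instance Definition _ (K K' : choiceType) (f : K -> K') :=
  GRing.isLinear.Build Cc _ _ *:%R (mmap f) (mmap_is_linear f).

Lemma malg_linear_ext (K : choiceType) (V : lmodType Cc)
    (f g : {malg Cc[K]} -> V) :
  linear f -> linear g -> (forall k, f (basis k) = g (basis k)) -> f =1 g.
Proof.
have lin0 (h : {malg Cc[K]} -> V) : linear h -> h 0 = 0.
  by move=> lin_h; have := lin_h (-1) 0 0; rewrite scaler0 addr0 scaleN1r addNr.
move=> lin_f lin_g fg x; rewrite (monalgE x).
elim: (enum_fset (msupp x)) => [|k s IH]; first by rewrite !big_nil !lin0.
by rewrite big_cons -[x@_k]mulr1 -scale_monalgU -basisE lin_f lin_g fg IH.
Qed.

Lemma linear_sub_fun (U V : lmodType Cc) (f g : U -> V) :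
  linear f -> linear g -> linear (fun x => f x - g x).
Proof. by move=> lin_f lin_g k x y; rewrite lin_f lin_g scalerBr opprD addrACA. Qed.

Section Monoid.
Variables (K : choiceType) (op : K -> K -> K).

Lemma mconvA : associative op -> associative (mconv op).
Proof.
move=> opA a b c; move: a; apply: malg_linear_ext => [k x y|k x y|g] /=.
- by rewrite linearPl.
- by rewrite linearPl /= linearPl.
move: b; apply: malg_linear_ext => [k x y|k x y|h] /=.
- by rewrite linearPl /= linearPr.
- by rewrite linearPr /= linearPl.
move: c; apply: malg_linear_ext => [k x y|k x y|i] /=.
- by rewrite linearPr /= linearPr.
- by rewrite linearPr.
by rewrite !mconv_basis opA.
Qed.

Lemma mconv1l k0 : left_id k0 op -> left_id (basis k0) (mconv op).
Proof.
move=> op1l; apply: malg_linear_ext => [k x y|//|g] /=; first by rewrite linearPr.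
by rewrite mconv_basis op1l.
Qed.

Lemma mconv1r k0 : right_id k0 op -> right_id (basis k0) (mconv op).
Proof.
move=> op1r; apply: malg_linear_ext => [k x y|//|g] /=; first by rewrite linearPl.
by rewrite mconv_basis op1r.
Qed.

End Monoid.

Lemma fgmul2A : associative fgmul2.
Proof. by move=> [g g'] [h h'] [k k']; rewrite /fgmul2 /= !fgmulA. Qed.

Lemma fgmul2_1l : left_id (fg1, fg1) fgmul2.
Proof. by move=> [g h]; rewrite /fgmul2 /= !fgmul1g. Qed.

Lemma fgmul2_1r : right_id (fg1, fg1) fgmul2.
Proof. by move=> [g h]; rewrite /fgmul2 /= !fgmulg1. Qed.

Lemma fgmul2E g h g' h' : fgmul2 (g, h) (g', h') = (fgmul g g', fgmul h h').
Proof. by []. Qed.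

Local Notation amul := (mconv fgmul).
Local Notation aamul := (mconv fgmul2).
Local Notation tensor := (mconv (@pair FG FG)).
Local Notation mult := (mmap (fun p : FG * FG => fgmul p.1 p.2)).

Lemma mult_mulr X b : mult (aamul X (tensor (basis fg1) b)) = amul (mult X) b.
Proof.
move: X; apply: malg_linear_ext => [k x y|k x y|[g h]] /=.
- by rewrite linearPl /= linearP.
- by rewrite linearP /= linearPl.
move: b; apply: malg_linear_ext => [k x y|k x y|i] /=.
- by rewrite linearPr /= linearPr /= linearP.
- by rewrite linearPr.
by rewrite !mconv_basis fgmul2E !mmap_basis mconv_basis fgmulg1 fgmulA.
Qed.

Lemma mult_mull X a : mult (aamul (tensor a (basis fg1)) X) = amul a (mult X).
Proof.
move: X; apply: malg_linear_ext => [k x y|k x y|[g h]] /=.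
- by rewrite linearPr /= linearP.
- by rewrite linearP /= linearPr.
move: a; apply: malg_linear_ext => [k x y|k x y|i] /=.
- by rewrite linearPl /= linearPl /= linearP.
- by rewrite linearPl.
by rewrite !mconv_basis fgmul2E !mmap_basis mconv_basis fgmul1g fgmulA.
Qed.

Definition derivation (d : A -> A) :=
  forall a b, d (amul a b) = amul (d a) b + amul a (d b).

Lemma addr_commutator_split (V : zmodType) (p q r s t : V) :
  p + q - (r - s) = (p - (r - t)) + (q - (t - s)).
Proof.
rewrite !opprB [RHS]addrACA; congr (_ + _).
by rewrite addrC addrA subrK.
Qed.

Lemma derivation_sub_commutator d x : derivation d ->
  derivation (fun a => d a - (amul x a - amul a x)).
Proof.
move=> der_d a b; rewrite der_d !(mconvBl, mconvBr) !(mconvA fgmulA).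
exact: addr_commutator_split.
Qed.

Lemma derivation1 d : derivation d -> d (basis fg1) = 0.
Proof.
move=> der_d; have := der_d (basis fg1) (basis fg1).
rewrite mconv_basis fgmul1g (mconv1l fgmul1g) (mconv1r fgmulg1).
by rewrite -{1}[d _]addr0 => /addrI/esym.
Qed.

Lemma derivation_inv d g gi :
  derivation d -> fgmul gi g = fg1 -> fgmul g gi = fg1 ->
  d (basis g) = 0 -> d (basis gi) = 0.
Proof.
move=> der_d gig ggi dg0; have := der_d (basis g) (basis gi).
rewrite mconv_basis ggi (derivation1 der_d) dg0 mconv0l add0r.
move=> /(congr1 (amul (basis gi))); rewrite mconv0r (mconvA fgmulA) mconv_basis gig.
by rewrite (mconv1l fgmul1g).
Qed.

Lemma derivation_generators_eq0 d : linear d -> derivation d ->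
  d (basis fg_u) = 0 -> d (basis fg_v) = 0 -> d =1 fun=> 0.
Proof.
move=> lin_d der_d du dv.
have dui : d (basis fg_ui) = 0.
  by apply: (derivation_inv der_d _ _ du); apply: val_inj.
have dvi : d (basis fg_vi) = 0.
  by apply: (derivation_inv der_d _ _ dv); apply: val_inj.
apply: malg_linear_ext => // [k x y|[w red_w]]; first by rewrite scaler0 addr0.
elim: w red_w => [|x w IH] red_w.
  by rewrite -(derivation1 der_d); congr (d (basis _)); apply: val_inj.
rewrite fgword_cons -mconv_basis der_d IH mconv0r addr0.
suff -> : d (basis (fg_letter x)) = 0 by rewrite mconv0l.
by case: x {red_w IH} => -[] [].
Qed.

Definition fg_c := fgmul (fgmul (fgmul fg_u fg_v) fg_ui) fg_vi.

Section DoubleBracket.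
Variable D : {linear AA -> AA}.
Hypothesis D_uv : D (tensor (basis fg_u) (basis fg_v)) =
  - tensor (amul (basis fg_v) (basis fg_u)) (basis fg1).
Hypothesis D_vu : D (tensor (basis fg_v) (basis fg_u)) =
  tensor (amul (basis fg_u) (basis fg_v)) (basis fg1).
Hypothesis D_uu : D (tensor (basis fg_u) (basis fg_u)) = 0.
Hypothesis D_vv : D (tensor (basis fg_v) (basis fg_v)) = 0.
Hypothesis D_mulr : forall a b c, D (tensor a (amul b c)) =
  aamul (D (tensor a b)) (tensor (basis fg1) c) +
  aamul (tensor b (basis fg1)) (D (tensor a c)).
Hypothesis D_mull : forall a b c, D (tensor (amul a b) c) =
  aamul (D (tensor a c)) (tensor b (basis fg1)) +
  aamul (tensor (basis fg1) a) (D (tensor b c)).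

Lemma D_mull_basis g h k : D (tensor (basis (fgmul g h)) (basis k)) =
  aamul (D (tensor (basis g) (basis k))) (basis (h, fg1)) +
  aamul (basis (fg1, g)) (D (tensor (basis h) (basis k))).
Proof. by rewrite -mconv_basis D_mull !mconv_basis. Qed.

Lemma D_1l k : D (tensor (basis fg1) (basis k)) = 0.
Proof.
have := D_mull_basis fg1 fg1 k.
rewrite fgmul1g (mconv1r fgmul2_1r) (mconv1l fgmul2_1l).
by rewrite -{1}[D _]addr0 => /addrI/esym.
Qed.

Lemma D_invl g gi k : fgmul gi g = fg1 -> fgmul g gi = fg1 ->
  D (tensor (basis gi) (basis k)) =
  - aamul (aamul (basis (fg1, gi)) (D (tensor (basis g) (basis k)))) (basis (gi, fg1)).
Proof.
move=> gig ggi; have := D_mull_basis gi g k; rewrite gig D_1l.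
move=> /esym/eqP; rewrite addr_eq0 => /eqP Dgi_g.
have unit_g : aamul (basis (g, fg1)) (basis (gi, fg1)) = basis (fg1, fg1).
  by rewrite mconv_basis fgmul2E ggi fgmul1g.
rewrite -[LHS](mconv1r fgmul2_1r) -unit_g (mconvA fgmul2A) Dgi_g.
exact: linearNl.
Qed.

Lemma D_uil k : D (tensor (basis fg_ui) (basis k)) =
  - aamul (aamul (basis (fg1, fg_ui)) (D (tensor (basis fg_u) (basis k))))
          (basis (fg_ui, fg1)).
Proof. by apply: D_invl; apply: val_inj. Qed.

Lemma D_vil k : D (tensor (basis fg_vi) (basis k)) =
  - aamul (aamul (basis (fg1, fg_vi)) (D (tensor (basis fg_v) (basis k))))
          (basis (fg_vi, fg1)).
Proof. by apply: D_invl; apply: val_inj. Qed.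

Lemma bracket_c_u : mult (D (tensor (basis fg_c) (basis fg_u))) =
  basis (fgmul fg_c fg_u) - basis (fgmul fg_u fg_c).
Proof.
rewrite /fg_c !D_mull_basis D_uil D_vil D_uu D_vu.
rewrite !(mconv_basis, fgmul2E, mconv0l, mconv0r, mconvNl, mconvNr, mconvDl).
rewrite !(oppr0, add0r, addr0, subr0) linearB /= !mmap_basis /=.
by congr (basis _ - basis _); apply: val_inj.
Qed.

Lemma bracket_c_v : mult (D (tensor (basis fg_c) (basis fg_v))) =
  basis (fgmul fg_c fg_v) - basis (fgmul fg_v fg_c).
Proof.
rewrite /fg_c !D_mull_basis D_uil D_vil D_uv D_vv.
rewrite !(mconv_basis, fgmul2E, mconv0l, mconv0r, mconvNl, mconvNr, mconvDl).
rewrite !(oppr0, opprK, add0r, addr0) addrC linearB /= !mmap_basis /=.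
by congr (basis _ - basis _); apply: val_inj.
Qed.

Lemma derivation_bracket x : derivation (fun a => mult (D (tensor x a))).
Proof. by move=> a b; rewrite D_mulr linearD /= mult_mulr mult_mull. Qed.

Definition c_defect a :=
  mult (D (tensor (basis fg_c) a)) - (amul (basis fg_c) a - amul a (basis fg_c)).

Lemma c_defect_linear : linear c_defect.
Proof.
apply: linear_sub_fun; first by move=> k x y; rewrite linearPr /= !linearP.
by apply: linear_sub_fun => k x y; [apply: linearPr|apply: linearPl].
Qed.

Lemma c_defect_eq0 : c_defect =1 fun=> 0.
Proof.
apply: derivation_generators_eq0 c_defect_linear _ _ _.
- exact: derivation_sub_commutator (derivation_bracket _).
- by apply/eqP; rewrite /c_defect subr_eq0 bracket_c_u !mconv_basis.
- by apply/eqP; rewrite /c_defect subr_eq0 bracket_c_v !mconv_basis.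
Qed.

End DoubleBracket.

Lemma Amul_mconv : Amul = amul. Proof. by rewrite /mconv unlock. Qed.
Lemma AAmul_mconv : AAmul = aamul. Proof. by rewrite /mconv unlock. Qed.
Lemma tens_mconv : tens = tensor. Proof. by rewrite /mconv unlock. Qed.
Lemma mu_mmap : mu = mult. Proof. by rewrite /mmap unlock. Qed.

Lemma cA_basis : cA = basis fg_c.
Proof. by rewrite /cA /Au /Av /Aui /Avi -!basisE Amul_mconv !mconv_basis. Qed.

Theorem mainTheorem6 (D : {linear AA -> AA}) :
  is_double_bracket_K D ->
  forall H : A, in_commA (bracketK D cA H).
Proof.
rewrite /is_double_bracket_K /Au /Av /A1 -!basisE Amul_mconv AAmul_mconv tens_mconv.
case=> D_uv D_vu [D_uu D_vv] D_mulr D_mull H.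
exists [:: (1, (cA, H))]; rewrite big_seq1 scale1r /= /bracketK.
rewrite cA_basis Amul_mconv tens_mconv mu_mmap.
apply/eqP; rewrite -subr_eq0; apply/eqP.
exact: (c_defect_eq0 D_uv D_vu D_uu D_vv D_mulr D_mull).
Qed.
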